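(* Let $\mathbb{F}$ be a field of characteristic $p>0$. Let $P(t,y),Q(t,y)\in\mathbb{F}[[t,y]]$ and $\varphi(t)\in\mathbb{F}[[t]]$ satisfy $P(t,y)=(y-\varphi(t))^{p^{\ell}e}\cdot Q(t,y)$ with $\ell\ge0$, $e\ge1$, $\gcd(p,e)=1$, $\varphi(0)=0$ and $Q(0,0)=\alpha\neq0$. Then $$\varphi(t)^{p^{\ell}}=\sum_{m\ge0}[y^{p^{\ell}(e(m+1)-2)}]\left(\frac{\mathcal{H}^{(p^{\ell})}_y(P)(t,y)}{e\cdot\alpha^{m+1}}\big(\alpha y^{p^{\ell}e}-P(t,y)\big)^m\right).$$ Moreover, for every $d\ge0$, $$\mathrm{Hom}_{\le d}\big[\varphi(t)^{p^{\ell}}\big]=\mathrm{Hom}_{\le d}\left[\sum_{m=0}^{2e(d+p^{\ell})}[y^{p^{\ell}(e(m+1)-2)}]\left(\frac{\mathcal{H}^{(p^{\ell})}_y(P)(t,y)}{e\cdot\alpha^{m+1}}\big(\alpha y^{p^{\ell}e}-P(t,y)\big)^m\right)\right].$$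
   Context: $\mathcal{H}^{(i)}_y(F)$, the Hasse derivative of order $i$ with respect to $y$, is the coefficient of $z^i$ in $F(t,y+z)$. For $G\in\mathbb{F}[[t,y]]$, $[y^a](G)\in\mathbb{F}[[t]]$ is the coefficient of $y^a$ when $G$ is viewed as a power series in $y$ over $\mathbb{F}[[t]]$. $\mathrm{Hom}_{\le d}$ of a power series in $t$ is its truncation to terms of degree at most $d$. *)

(* Formal power series are represented by their coefficient
   functions: F[[t]] as nat -> F (coefficient of t^i),
   F[[t,y]] as nat -> nat -> F (coefficient of t^i y^j). *)
From mathcomp Require Import all_boot all_order all_algebra.
Set Implicit Arguments. Unset Strict Implicit. Unset Printing Implicit Defensive.
Import Order.TTheory GRing.Theory Num.Theory.
Local Open Scope ring_scope.

Section PS.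
Variable F : fieldType.

Definition ps1 := nat -> F.
Definition ps2 := nat -> nat -> F.

Definition ps2_add (A B : ps2) : ps2 := fun i j => A i j + B i j.
Definition ps2_opp (A : ps2) : ps2 := fun i j => - A i j.
Definition ps2_sub (A B : ps2) : ps2 := ps2_add A (ps2_opp B).
Definition ps2_scale (c : F) (A : ps2) : ps2 := fun i j => c * A i j.
Definition ps2_mul (A B : ps2) : ps2 := fun i j =>
  \sum_(a < i.+1) \sum_(b < j.+1) A a b * B (i - a)%N (j - b)%N.
Definition ps2_one : ps2 := fun i j => if (i == 0%N) && (j == 0%N) then 1 else 0.
Definition ps2_exp (A : ps2) (n : nat) : ps2 := iter n (ps2_mul A) ps2_one.
Definition ps2_ypow (n : nat) : ps2 := fun i j => if (i == 0%N) && (j == n) then 1 else 0.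
Definition ps2_of_t (f : ps1) : ps2 := fun i j => if j == 0%N then f i else 0.

Definition ps1_one : ps1 := fun i => if i == 0%N then 1 else 0.
Definition ps1_mul (f g : ps1) : ps1 := fun i => \sum_(a < i.+1) f a * g (i - a)%N.
Definition ps1_exp (f : ps1) (n : nat) : ps1 := iter n (ps1_mul f) ps1_one.

(* Hasse derivative of order k w.r.t. y: the coefficient of z^k in A(t, y+z),
   written out coefficientwise: [t^i y^j] = binom(j+k, k) * [t^i y^(j+k)] A *)
Definition hasse_y (k : nat) (A : ps2) : ps2 := fun i j =>
  ('C(j + k, k))%:R * A i (j + k)%N.

Definition coef_y (a : int) (G : ps2) : ps1 := fun i =>
  match a with Posz n => G i n | Negz _ => 0 end.

Definition hom_le (d : nat) (f : ps1) : ps1 := fun i => if (i <= d)%N then f i else 0.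

Definition ps1_sum (n : nat) (u : nat -> ps1) : ps1 := fun i => \sum_(m < n) u m i.

(* t-adic convergence of the series sum_m u m to L *)
Definition ps1_series_to (u : nat -> ps1) (L : ps1) : Prop :=
  forall i, exists N, forall M, (N <= M)%N -> ps1_sum M u i = L i.

Definition corA4_term (p l e : nat) (alpha : F) (P : ps2) (m : nat) : ps1 :=
  coef_y ((p ^ l)%:Z * ((e * m.+1)%:Z - 2))
    (ps2_scale ((e%:R * alpha ^+ m.+1)^-1)
       (ps2_mul (hasse_y (p ^ l) P)
          (ps2_exp (ps2_sub (ps2_scale alpha (ps2_ypow (p ^ l * e))) P) m))).

End PS.

From mathcomp Require Import all_boot all_order all_algebra.
From mathcomp Require Import zify ring.
From Stdlib Require Import FunctionalExtensionality.
Set Implicit Arguments. Unset Strict Implicit. Unset Printing Implicit Defensive.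
Import Order.TTheory GRing.Theory Num.Theory.
Local Open Scope ring_scope.

(* Write phi = t g and q = p^l.  Truncated at a high degree, P is the polynomial
   b^(qe) Q with b = y - t g, and in characteristic p the Taylor expansion of
   b^(qe) = (b^q)^e shows H^(q)_y P = b^(q(e-1)) (b^q H^(q)_y Q + e Q).
   The blow-up t |-> t y sends b to y V with V = 1 - t g(t y), so the m-th
   summand becomes y^(q(e-1) + qem) Z_m with Z_m = V^(q(e-1)) K E^m, where K is
   the blow-up of b^q H^(q)_y Q + e Q and E = alpha - V^(qe) Q(t y, y).
   The series sum_m alpha^-(m+1) Z_m is geometric; up to terms of total degree
   > 2i its sum is e / (1 - (t g(t y))^q) plus y^q times a blown-up polynomial.
   In the coefficient of t^i y^(i-q) only the term e (t g(t y))^q survives, and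
   it contributes e [t^i] phi^q. *)

Lemma pchar_expn_gt0 (S : nzRingType) (p l : nat) : p \in [pchar S] -> (0 < p ^ l)%N.
Proof. by move=> hp; rewrite expn_gt0 (prime_gt0 (pcharf_prime hp)). Qed.

Lemma pchar_natX (S : nzRingType) (p l : nat) :
  p \in [pchar S] -> [pchar S].-nat (p ^ l)%N.
Proof. by move=> hp; rewrite pnatX pnatE ?(pcharf_prime hp) ?hp. Qed.

Lemma exprSD_mod_sqr (S : comNzRingType) (c x : S) n :
  exists w, (c + x) ^+ n.+1 = c ^+ n.+1 + n.+1%:R * c ^+ n * x + x ^+ 2 * w.
Proof.
elim: n => [|n [w IH]]; first by exists 0; rewrite !expr1 expr0 mulr1 mul1r mulr0 addr0.
exists (c * w + n.+1%:R * c ^+ n + x * w).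
by rewrite exprS IH !exprS -[in _.+2%:R]addn1 natrD; ring.
Qed.

Lemma geometric_sum (S : comNzRingType) (x : S) n :
  (1 - x) * \sum_(k < n) x ^+ k = 1 - x ^+ n.
Proof. by rewrite -[RHS]opprB subrX1 -mulNr opprB. Qed.

Section Bivariate.
Variable A : comNzRingType.
Local Notation R := {poly {poly A}}.
Implicit Types (u v : R).

Definition taylor : {rmorphism {poly A} -> R} := comp_poly ('X + 'Y) \o map_poly polyC.

Lemma taylorX : taylor 'X = 'Y + 'X.
Proof. by rewrite /= map_polyX comp_polyX addrC. Qed.

Lemma taylorC c : taylor c%:P = c%:P%:P.
Proof. by rewrite /= map_polyC comp_polyC. Qed.

Lemma coef_taylor (r : {poly A}) k : (taylor r)`_k = r^`N(k).
Proof.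
pose n := maxn (size r) k.+1.
have hs : (size (r^:P^:P) <= n)%N by rewrite !size_map_polyC leq_maxl.
have evalX (s : {poly A}) : s^:P.['X] = s := comp_polyXr s.
rewrite /= /comp_poly addrC (nderiv_taylor_wide (mulrC _ _) hs).
under eq_bigr => i _ do rewrite !nderivn_map horner_map evalX mul_polyC.
by rewrite -(poly_def n (fun i => r^`N(i))) coef_poly leq_max ltnSn orbT.
Qed.

Lemma nderivn_pchar_root_mul p l e c (Q : {poly A}) :
  p \in [pchar A] -> (0 < e)%N ->
  (('X - c%:P) ^+ (p ^ l * e) * Q)^`N(p ^ l) =
  ('X - c%:P) ^+ (p ^ l * e.-1) * (('X - c%:P) ^+ (p ^ l) * Q^`N(p ^ l) + e%:R * Q).
Proof.
move=> hp; case: e => [//|e] _; set q := (p ^ l)%N; set b := 'X - c%:P.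
have hq := pchar_expn_gt0 l hp.
have hpR : p \in [pchar R] by rewrite !pchar_poly.
(* (b(Y) + X)^(qe) = (b^q(Y) + X^q)^e has X^q-coefficient e b^(q(e-1)). *)
have tb : taylor b = b%:P + 'X by rewrite rmorphB taylorX taylorC rmorphB /= addrAC.
have [w hw] := exprSD_mod_sqr (b ^+ q)%:P ('X ^+ q) e.
rewrite -[LHS]coef_taylor rmorphM rmorphXn tb exprM (exprDn_pchar _ _ (pchar_natX l hpR)).
rewrite -rmorphXn hw !mulrDl !coefD -!rmorphXn -!mulrA !coefCM !coef_taylor.
rewrite [in LHS]mulr_natl coefMn coefCM coefXnM ltnn subnn coef_taylor nderivn0.
rewrite mulrA -exprD coefXnM ifT; last lia.
by rewrite addr0 /= -!exprM mulnS exprD -mulr_natl; ring.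
Qed.

(* Reading u : {poly {poly A}} as sum u`_j`_i t^i y^j (y is the outer variable 'X
   and t the inner one 'Y), blowup substitutes t |-> t y. *)
Definition blowup_coef : {rmorphism {poly A} -> R} := comp_poly ('X * 'Y) \o map_poly polyC.
Definition blowup : {rmorphism R -> R} := horner_eval 'X \o map_poly blowup_coef.

Lemma blowup_coefC c : blowup_coef c%:P = c%:P%:P.
Proof. by rewrite /= map_polyC comp_polyC. Qed.

Lemma blowup_coefX : blowup_coef 'X = 'X * 'Y.
Proof. by rewrite /= map_polyX comp_polyX. Qed.

Lemma blowupC (a : {poly A}) : blowup a%:P = blowup_coef a.
Proof. by rewrite /= horner_evalE map_polyC hornerC. Qed.

Lemma blowupX : blowup 'X = 'X.
Proof. by rewrite /= horner_evalE map_polyX hornerX. Qed.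

Lemma coef_blowup_coef a c k : (blowup_coef a)`_c`_k = if c == k then a`_k else 0.
Proof.
elim/poly_ind: a c k => [|a d IH] c k; first by rewrite rmorph0 !coef0; case: ifP.
rewrite rmorphD rmorphM blowup_coefX blowup_coefC !coefD coefC mulrA coefMC !coefMX !coefC.
by case: c => [|c]; case: k => [|k]; rewrite /= ?coef0 ?coefC ?add0r ?addr0 ?eqSS.
Qed.

Lemma coef_blowup u c a : (blowup u)`_c`_a = if (a <= c)%N then u`_(c - a)`_a else 0.
Proof.
elim/poly_ind: u c a => [|u d IH] c a.
  by rewrite rmorph0 !coef0; case: ifP; rewrite ?coef0.
rewrite rmorphD rmorphM blowupX blowupC !coefD coefMX coef_blowup_coef coefMX coefC.
case: c => [|c] /=; first by rewrite !coef0 !add0r; case: a.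
rewrite IH; case: (ltngtP a c.+1) => h.
- by rewrite subSn // coef0 addr0 -ltnS h addr0.
- by rewrite ifN ?addr0 //; lia.
- by rewrite h subnn ltnn !coef0 !add0r.
Qed.

Lemma coef_blowup_shift u c a : (blowup u)`_(c + a)`_a = u`_c`_a.
Proof. by rewrite coef_blowup leq_addl addnK. Qed.

Lemma coef_exp_Yblowup_coef (h : {poly A}) n c k :
  (('Y * blowup_coef h) ^+ n)`_c`_k = if k == (n + c)%N then (h ^+ n)`_c else 0.
Proof.
rewrite exprMn -!rmorphXn coefCM coefXnM coef_blowup_coef.
case: ltnP => hkn; first by rewrite ifF //; apply/negbTE; lia.
by case: eqP => [->|hc]; rewrite ?addKn ?eqxx //; case: eqP => //; lia.
Qed.

End Bivariate.
Arguments taylor {A}.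
Arguments blowup_coef {A}.
Arguments blowup {A}.

Section Order.
Variable A : comNzRingType.
Local Notation R := {poly {poly A}}.
Implicit Types (u v r s : R).

Definition ord_ge L u := forall c a, (c + a < L)%N -> u`_c`_a = 0.

Lemma ord_geW L M u : (M <= L)%N -> ord_ge L u -> ord_ge M u.
Proof. by move=> leML h c a ?; apply: h; lia. Qed.

Lemma ord_geD L u v : ord_ge L u -> ord_ge L v -> ord_ge L (u + v).
Proof. by move=> hu hv c a h; rewrite !coefD hu ?hv ?addr0. Qed.

Lemma ord_geN L u : ord_ge L u -> ord_ge L (- u).
Proof. by move=> hu c a h; rewrite !coefN hu ?oppr0. Qed.

Lemma ord_geB L u v : ord_ge L u -> ord_ge L v -> ord_ge L (u - v).
Proof. by move=> hu hv; apply: ord_geD => //; apply: ord_geN. Qed.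

Lemma ord_geM L1 L2 u v : ord_ge L1 u -> ord_ge L2 v -> ord_ge (L1 + L2) (u * v).
Proof.
move=> hu hv c a h; rewrite coefM coef_sum big1 // => c1 _.
rewrite coefM big1 // => a1 _; move: (ltn_ord c1) (ltn_ord a1) => ? ?.
have [?|?] := ltnP (c1 + a1) L1; first by rewrite hu ?mul0r.
by rewrite hv ?mulr0 //; lia.
Qed.

Lemma ord_geMl L u v : ord_ge L v -> ord_ge L (u * v).
Proof. by move=> h; rewrite -[L]add0n; apply: ord_geM. Qed.

Lemma ord_geMr L u v : ord_ge L u -> ord_ge L (u * v).
Proof. by move=> h; rewrite mulrC; apply: ord_geMl. Qed.

Lemma ord_ge1 u : u`_0`_0 = 0 -> ord_ge 1 u.
Proof. by move=> h [|c] [|a]. Qed.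

Lemma ord_geX k u : ord_ge 1 u -> ord_ge k (u ^+ k).
Proof.
move=> h; elim: k => [|k IH]; first by [].
by rewrite exprS -add1n; apply: ord_geM.
Qed.

Lemma coef00X u k : (u ^+ k)`_0`_0 = u`_0`_0 ^+ k.
Proof. by elim: k => [|k IH]; rewrite ?coef1 // !exprS !coef0M IH. Qed.

Lemma ord_ge_eq_1sub L u v r s :
  ord_ge L r -> ord_ge L s -> u * (1 - r) = v * (1 - s) -> ord_ge L (u - v).
Proof.
move=> hr hs huv; have -> : u - v = u * r - v * s.
  apply/eqP; rewrite -subr_eq0.
  have -> : u - v - (u * r - v * s) = u * (1 - r) - v * (1 - s) by ring.
  by rewrite huv subrr.
by apply: ord_geB; apply: ord_geMl.
Qed.

End Order.

Section BlowupSeries.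
Variables (A : comUnitRingType) (p l e : nat) (alpha : A) (g : {poly A}) (Q : {poly {poly A}}).
Hypotheses (pchar_p : p \in [pchar A]) (e_gt0 : (0 < e)%N).
Hypotheses (Q00 : Q`_0`_0 = alpha) (alpha_unit : alpha \is a GRing.unit).

Local Notation q := (p ^ l)%N.
Local Notation a := alpha^-1.
Local Notation b := ('X - ('X * g)%:P).
Local Notation V := (1 - 'Y * blowup_coef g).
Local Notation T := (('Y * blowup_coef g) ^+ q).
Local Notation E := (alpha%:P%:P - V ^+ (q * e) * blowup Q).
Local Notation K := (b ^+ q * Q^`N(q) + e%:R * Q).
Local Notation Y := (1 - a%:P%:P * Q).

Definition blowup_term m : {poly {poly A}} := V ^+ (q * e.-1) * blowup K * E ^+ m.

Lemma blowup_root_factor : blowup b = 'X * V.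
Proof. by rewrite rmorphB blowupX blowupC rmorphM blowup_coefX; ring. Qed.

Lemma blowup_alphaX_subP :
  blowup (alpha%:P%:P * 'X^(q * e) - b ^+ (q * e) * Q) = 'X ^+ (q * e) * E.
Proof.
rewrite rmorphB !(rmorphM blowup) !rmorphXn blowup_root_factor blowupX blowupC.
by rewrite blowup_coefC exprMn; ring.
Qed.

Lemma blowup_hasse_summand m :
  blowup ((b ^+ (q * e) * Q)^`N(q) * (alpha%:P%:P * 'X^(q * e) - b ^+ (q * e) * Q) ^+ m) =
  'X ^+ (q * e.-1 + q * e * m) * blowup_term m.
Proof.
have pchar_p' : p \in [pchar {poly A}] by rewrite pchar_poly.
rewrite nderivn_pchar_root_mul // rmorphM rmorphXn blowup_alphaX_subP rmorphM rmorphXn.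
rewrite blowup_root_factor /blowup_term !exprMn -exprM exprD.
by move: (blowup K) => k; ring.
Qed.

Lemma coef_blowup_term_lt m c k : (c + (q * e.-1 + q * e * m) < k)%N ->
  (blowup_term m)`_c`_k = 0.
Proof.
move=> lt_ck; have := coef_blowup ((b ^+ (q * e) * Q)^`N(q) *
  (alpha%:P%:P * 'X^(q * e) - b ^+ (q * e) * Q) ^+ m) (c + (q * e.-1 + q * e * m)) k.
by rewrite blowup_hasse_summand coefXnM ltnNge leq_addl addnK leqNgt lt_ck.
Qed.

Lemma frobenius_V : V ^+ q = 1 - T.
Proof.
have hq : [pchar {poly {poly A}}].-nat q by apply: pchar_natX; rewrite !pchar_poly.
by rewrite (exprDn_pchar _ _ hq) expr1n (exprNn_pchar _ hq).
Qed.

Lemma blowupK : blowup K = 'X ^+ q * (1 - T) * blowup Q^`N(q) + e%:R * blowup Q.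
Proof.
rewrite rmorphD !(rmorphM blowup) rmorph_nat rmorphXn blowup_root_factor.
by rewrite exprMn frobenius_V.
Qed.

Lemma ord_ge1_T : ord_ge 1 T.
Proof.
apply: (ord_geW (pchar_expn_gt0 l pchar_p)); apply/ord_geX/ord_geMr/ord_ge1.
by rewrite coefC /= coefX.
Qed.

Lemma ord_ge1_blowupY : ord_ge 1 (blowup Y).
Proof.
apply: ord_ge1; rewrite coef_blowup /= !coefB !coef1 !coefCM Q00.
by rewrite mulVr // subrr.
Qed.

Lemma ord_ge1_E : ord_ge 1 E.
Proof.
apply: ord_ge1; rewrite !coefB !coef0M coef00X !coefB !coef1 !coef0M coef_blowup Q00.
by rewrite !coefC /= coefX mul0r subr0 expr1n mul1r subrr.
Qed.

Section Truncated.
Variables (L M : nat).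
Hypothesis leLM : (L <= M)%N.

Local Notation U1 := (\sum_(k < L) T ^+ k).
Local Notation U2 := (blowup (a%:P%:P * \sum_(k < L) Y ^+ k)).
Local Notation Z := (\sum_(m < M) (a ^+ m.+1)%:P%:P * blowup_term m).

(* Z is a geometric series of ratio a E, and alpha - E = V^(qe) blowup Q. *)
Lemma blowup_term_sum : V ^+ q * blowup Q * Z = blowup K * (1 - (a%:P%:P * E) ^+ M).
Proof.
have alphaK : alpha%:P%:P * a%:P%:P = 1 :> {poly {poly A}}.
  by rewrite -!rmorphM divrr // !rmorph1.
have hV : V ^+ (q * e) = V ^+ q * V ^+ (q * e.-1) by rewrite -exprD -mulnS prednK.
have h1E : 1 - a%:P%:P * E = V ^+ (q * e) * blowup Q * a%:P%:P.
  by rewrite mulrBr [_ * alpha%:P%:P]mulrC alphaK; ring.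
rewrite -geometric_sum h1E !mulr_sumr; apply: eq_bigr => m _.
rewrite /blowup_term !rmorphXn exprMn hV exprS.
by move: (blowup K) => k; ring.
Qed.

Lemma blowupQ_U2 : blowup Q * U2 = 1 - blowup Y ^+ L.
Proof.
rewrite -rmorphM (_ : Q * _ = (1 - Y) * \sum_(k < L) Y ^+ k).
  by rewrite geometric_sum rmorphB rmorph1 rmorphXn.
by rewrite subKr mulrA [Q * _]mulrC.
Qed.

(* U1 and U2 are truncations of 1 / V^q and 1 / blowup Q. *)
Lemma blowup_term_sum_cleared :
  Z * ((1 - T ^+ L) * (1 - blowup Y ^+ L)) =
  ('X ^+ q * (1 - T ^+ L) * (U2 * blowup Q^`N(q)) + e%:R * U1 * (1 - blowup Y ^+ L))
  * (1 - (a%:P%:P * E) ^+ M).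
Proof.
transitivity (U1 * U2 * (V ^+ q * blowup Q * Z)).
  by rewrite -(geometric_sum T) -blowupQ_U2 frobenius_V; move: Z U1 U2 => z u1 u2; ring.
transitivity (U1 * U2 * (blowup K * (1 - (a%:P%:P * E) ^+ M))).
  by congr (_ * _); exact: blowup_term_sum.
rewrite blowupK -(geometric_sum T) -blowupQ_U2.
by move: U1 U2 ((a%:P%:P * E) ^+ M) (blowup Q) (blowup Q^`N(q)) => u1 u2 s qt qq; ring.
Qed.

Lemma blowup_term_sum_mod : ord_ge L (Z - (e%:R * U1 + 'X ^+ q * (U2 * blowup Q^`N(q)))).
Proof.
have ordTL : ord_ge L (T ^+ L) := ord_geX ord_ge1_T.
have ordYL : ord_ge L (blowup Y ^+ L) := ord_geX ord_ge1_blowupY.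
have ordEM : ord_ge L ((a%:P%:P * E) ^+ M).
  by apply: (ord_geW leLM); apply/ord_geX/ord_geMl/ord_ge1_E.
have ordR : ord_ge L (1 - (1 - T ^+ L) * (1 - blowup Y ^+ L)).
  rewrite (_ : 1 - _ = T ^+ L + blowup Y ^+ L - T ^+ L * blowup Y ^+ L); last by ring.
  by apply: ord_geB; [apply: ord_geD | apply: ord_geMl].
set W' := 'X ^+ q * (1 - T ^+ L) * (U2 * blowup Q^`N(q)) + e%:R * U1 * (1 - blowup Y ^+ L).
have ordZW' : ord_ge L (Z - W').
  by apply: ord_ge_eq_1sub ordR ordEM _; rewrite subKr; exact: blowup_term_sum_cleared.
have -> : Z - (e%:R * U1 + 'X ^+ q * (U2 * blowup Q^`N(q))) =
          (Z - W') - ('X ^+ q * T ^+ L * (U2 * blowup Q^`N(q)) + e%:R * U1 * blowup Y ^+ L).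
  by rewrite /W'; move: Z U1 U2 => z u1 u2; ring.
apply: ord_geB => //.
by apply: ord_geD; [apply: ord_geMr; apply: ord_geMl | apply: ord_geMl].
Qed.
End Truncated.

Lemma coef_sum_T L i : (q <= i)%N -> (1 < L)%N ->
  (\sum_(k < L) T ^+ k)`_(i - q)`_i = (g ^+ q)`_(i - q).
Proof.
move=> le_qi lt1L; have q_gt0 := pchar_expn_gt0 l pchar_p.
rewrite !coef_sum (bigD1 (Ordinal lt1L)) //= big1 ?addr0.
  by rewrite -exprM coef_exp_Yblowup_coef muln1 subnKC ?eqxx.
move=> k /eqP k_neq1; rewrite -exprM coef_exp_Yblowup_coef ifN //.
by apply/eqP => hik; apply: k_neq1; apply: val_inj => /=; nia.
Qed.

Lemma coef_blowup_term_sum i M : (q <= i)%N -> (2 * i < M)%N ->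
  \sum_(m < M) a ^+ m.+1 * (blowup_term m)`_(i - q)`_i = (g ^+ q)`_(i - q) *+ e.
Proof.
move=> le_qi ltM; have q_gt0 := pchar_expn_gt0 l pchar_p.
have coefXblowup u : ('X ^+ q * blowup u)`_(i - q)`_i = 0.
  by rewrite coefXnM; case: ifP => _; rewrite ?coef0 // coef_blowup ifN //; lia.
have hlt : (i - q + i < (2 * i).+1)%N by lia.
move/eqP: (blowup_term_sum_mod ltM hlt); rewrite !coefB subr_eq0 => /eqP.
rewrite (_ : \sum_(m < M) _ = (\sum_(m < M) (a ^+ m.+1)%:P%:P * blowup_term m)`_(i - q)`_i).
  move=> ->; rewrite !coefD -rmorphM coefXblowup addr0 mulr_natl !coefMn coef_sum_T //; lia.
by rewrite !coef_sum; apply: eq_bigr => m _; rewrite !coefCM.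
Qed.
End BlowupSeries.

Section Truncation.
Variable F : fieldType.
Local Notation R := {poly {poly F}}.
Implicit Types (A B : ps2 F) (u v : R) (N : nat).

Definition agree2 N A u := forall i j, (i < N)%N -> (j < N)%N -> A i j = u`_j`_i.
Definition agree1 N (f : ps1 F) (g : {poly F}) := forall i, (i < N)%N -> f i = g`_i.

Lemma agree2W N M A u : (M <= N)%N -> agree2 N A u -> agree2 M A u.
Proof. by move=> leMN h i j ? ?; apply: h; lia. Qed.

Lemma agree2_poly N A : agree2 N A (\poly_(j < N) \poly_(i < N) A i j).
Proof. by move=> i j hi hj; rewrite coef_poly hj coef_poly hi. Qed.

Lemma agree2M N A B u v : agree2 N A u -> agree2 N B v -> agree2 N (ps2_mul A B) (u * v).
Proof.
move=> hA hB i j hi hj; rewrite /ps2_mul coefM coef_sum exchange_big /=.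
apply: eq_bigr => b _; rewrite coefM; apply: eq_bigr => a _.
move: (ltn_ord a) (ltn_ord b) => ? ?; rewrite hA ?hB //; lia.
Qed.

Lemma agree2_one N : agree2 N (ps2_one F) 1.
Proof. by move=> i [|j] _ _; rewrite /ps2_one coef1 /= ?coef1 ?coef0 ?andbF //; case: i. Qed.

Lemma agree2X N A u k : agree2 N A u -> agree2 N (ps2_exp A k) (u ^+ k).
Proof.
move=> h; elim: k => [|k IH]; first exact: agree2_one.
by rewrite exprS /ps2_exp iterS; apply: agree2M.
Qed.

Lemma agree2D N A B u v : agree2 N A u -> agree2 N B v -> agree2 N (ps2_add A B) (u + v).
Proof. by move=> hA hB i j hi hj; rewrite /ps2_add !coefD hA ?hB. Qed.

Lemma agree2N N A u : agree2 N A u -> agree2 N (ps2_opp A) (- u).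
Proof. by move=> hA i j hi hj; rewrite /ps2_opp !coefN hA. Qed.

Lemma agree2B N A B u v : agree2 N A u -> agree2 N B v -> agree2 N (ps2_sub A B) (u - v).
Proof. by move=> hA hB; apply: agree2D => //; apply: agree2N. Qed.

Lemma agree2Z N c A u : agree2 N A u -> agree2 N (ps2_scale c A) (c%:P%:P * u).
Proof. by move=> hA i j hi hj; rewrite /ps2_scale !coefCM hA. Qed.

Lemma agree2_ypow N n : agree2 N (ps2_ypow F n) 'X^n.
Proof.
move=> i j _ _; rewrite /ps2_ypow coefXn.
by case: (j == n); rewrite ?coef1 ?coef0 ?andbT ?andbF //; case: i.
Qed.

Lemma agree2_of_t N f g : agree1 N f g -> agree2 N (ps2_of_t f) g%:P.
Proof. by move=> h i [|j] hi _; rewrite /ps2_of_t coefC /= ?coef0 ?h. Qed.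

Lemma agree2_hasse N k A u : agree2 (N + k) A u -> agree2 N (hasse_y k A) u^`N(k).
Proof.
move=> h i j hi hj; rewrite /hasse_y coef_nderivn coefMn h; try lia.
by rewrite mulr_natl addnC.
Qed.

Lemma agree1M N f h g k : agree1 N f g -> agree1 N h k -> agree1 N (ps1_mul f h) (g * k).
Proof.
move=> hf hh i hi; rewrite /ps1_mul coefM; apply: eq_bigr => a _.
move: (ltn_ord a) => ?; rewrite hf ?hh //; lia.
Qed.

Lemma agree1X N f g k : agree1 N f g -> agree1 N (ps1_exp f k) (g ^+ k).
Proof.
move=> h; elim: k => [|k IH]; first by move=> [|i] _; rewrite /ps1_exp /= /ps1_one coef1.
by rewrite exprS /ps1_exp iterS; apply: agree1M.
Qed.

End Truncation.

Lemma coef_y_neg (F : fieldType) (z : int) (G : ps2 F) i : (z < 0)%R -> coef_y z G i = 0.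
Proof. by case: z. Qed.

Section PowerSeries.
Variables (F : fieldType) (p : nat) (P Q : ps2 F) (phi : ps1 F) (l e : nat) (alpha : F).
Hypotheses (pchar_p : p \in [pchar F]) (e_gt0 : (0 < e)%N) (coprime_pe : coprime p e).
Hypotheses (phi0 : phi 0%N = 0) (Q00 : Q 0%N 0%N = alpha) (alpha_neq0 : alpha != 0).
Hypothesis P_def :
  P = ps2_mul (ps2_exp (ps2_sub (ps2_ypow F 1) (ps2_of_t phi)) (p ^ l * e)) Q.

Local Notation q := (p ^ l)%N.
Local Notation gN N := (\poly_(k < N) phi k.+1).
Local Notation QN N := (\poly_(j < N) \poly_(k < N) Q k j).
Local Notation PN N := (('X - ('X * gN N)%:P) ^+ (q * e) * QN N).

Lemma agree1_phi N : agree1 N phi ('X * gN N).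
Proof. by move=> [|k] hk; rewrite coefXM ?phi0 //= coef_poly; case: ltnP => //; lia. Qed.

Lemma agree2_P N : agree2 N P (PN N).
Proof.
rewrite P_def; apply: agree2M; last exact: agree2_poly.
apply: agree2X; rewrite -[X in X - _]expr1; apply: agree2B; first exact: agree2_ypow.
exact/agree2_of_t/agree1_phi.
Qed.

Lemma agree2_hasse_summand N m :
  agree2 N
    (ps2_mul (hasse_y q P) (ps2_exp (ps2_sub (ps2_scale alpha (ps2_ypow F (q * e))) P) m))
    ((PN (N + q))^`N(q) * (alpha%:P%:P * 'X^(q * e) - PN (N + q)) ^+ m).
Proof.
apply: agree2M; first exact/agree2_hasse/agree2_P.
apply/agree2X/agree2B; first exact/agree2Z/agree2_ypow.
exact: agree2W (leq_addr q N) (@agree2_P (N + q)).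
Qed.

Lemma corA4_term_blowup N m i : (q * (e * m.+1) < N)%N -> (i < N)%N ->
  corA4_term p l e alpha P m i =
  if (q <= i)%N then
    (e%:R * alpha ^+ m.+1)^-1 *
    (blowup_term p l e alpha (gN (N + q)) (QN (N + q)) m)`_(i - q)`_i
  else 0.
Proof.
move=> hN hi; have q_gt0 := pchar_expn_gt0 l pchar_p.
rewrite /corA4_term; case: (leqP 2 (e * m.+1)) => he2; last first.
  have [-> ->] : e = 1%N /\ m = 0%N by move: he2; case: (m) => [|m']; lia.
  rewrite coef_y_neg; last by lia.
  case: leqP => // le_qi; rewrite (coef_blowup_term_lt _ _ _ pchar_p) ?mulr0 //; lia.
rewrite subzn // -PoszM /coef_y /ps2_scale.
have hk : (q * (e * m.+1 - 2) < N)%N.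
  by rewrite (leq_ltn_trans _ hN) // leq_mul2l leq_subr orbT.
rewrite (agree2_hasse_summand (N := N)) //.
rewrite -coef_blowup_shift blowup_hasse_summand //.
have -> : (q * e.-1 + q * e * m = q * (e * m.+1) - q)%N by case: (e) e_gt0 => // e' _; nia.
rewrite coefXnM mulnBr.
have h2q : (q * 2 <= q * (e * m.+1))%N by rewrite leq_mul2l he2 orbT.
case: (leqP q i) => le_qi; last by rewrite ifT ?coef0 ?mulr0 //; lia.
by rewrite ifN; [congr (_ * (blowup_term _ _ _ _ _ _ _)`__`__) | ]; lia.
Qed.

Lemma corA4_partial_sum i M : (2 * i < M)%N ->
  ps1_sum M (corA4_term p l e alpha P) i = ps1_exp phi q i.
Proof.
move=> ltM; pose N := (q * e * M + i).+1.
have e_neq0 : e%:R != 0 :> F.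
  by rewrite -(dvdn_pcharf pchar_p) -prime_coprime ?(pcharf_prime pchar_p).
have QN00 : (QN (N + q))`_0`_0 = alpha by rewrite -(agree2_poly Q) ?addn_gt0.
have hiN : (i < N)%N by rewrite /N ltnS leq_addl.
rewrite (agree1X q (@agree1_phi (N + q))) ?ltn_addr // exprMn coefXnM.
have hmN (m : 'I_M) : (q * (e * m.+1) < N)%N.
  by rewrite /N ltnS (leq_trans _ (leq_addr _ _)) // mulnA leq_mul2l ltn_ord orbT.
rewrite /ps1_sum (eq_bigr _ (fun m _ => corA4_term_blowup (hmN m) hiN)).
case: ltnP => [lt_iq|le_qi]; first by rewrite big1 // => m _; rewrite leqNgt lt_iq.
under eq_bigr do rewrite invfM -exprVn -mulrA.
rewrite -mulr_sumr (coef_blowup_term_sum _ pchar_p e_gt0 QN00) ?unitfE //.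
by rewrite -[in X in _ * X]mulr_natl mulKf.
Qed.

End PowerSeries.

Unset Implicit Arguments.
Theorem corollaryA4 (F : fieldType) (p : nat) (P Q : ps2 F) (phi : ps1 F)
    (l e : nat) (alpha : F) :
  p \in [pchar F] ->
  (0 < e)%N -> coprime p e ->
  phi 0%N = 0 ->
  Q 0%N 0%N = alpha -> alpha != 0 ->
  P = ps2_mul (ps2_exp (ps2_sub (ps2_ypow F 1) (ps2_of_t phi)) (p ^ l * e)) Q ->
  ps1_series_to (corA4_term p l e alpha P) (ps1_exp phi (p ^ l)) /\
  (forall d : nat,
     hom_le d (ps1_exp phi (p ^ l)) =
     hom_le d (ps1_sum (2 * e * (d + p ^ l)).+1 (corA4_term p l e alpha P))).
Proof.
move=> pchar_p e_gt0 coprime_pe phi0 Q00 alpha_neq0 P_def.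
have partial_sum := corA4_partial_sum pchar_p e_gt0 coprime_pe phi0 Q00 alpha_neq0 P_def.
split=> [i | d]; first by exists (2 * i).+1 => M; apply: partial_sum.
apply: functional_extensionality => i; rewrite /hom_le.
by case: ifP => // le_id; rewrite partial_sum //; nia.
Qed.
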